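(* Fix $\lambda>0$ and a positive integer $d$. Let $\phi$ be a message and $\Phi=\phi'$. Let $p,q$ be positive reals with $\frac1p+\frac1q=1$. Define $$S_{\phi,p}(x)=\left(\frac{e^{-x}}{\Phi(e^x-1)}\right)^p,\qquad \Xi_{\phi,q}(d,x)=d^{q-1}\left(\frac{\Phi(f_d(x))f_d(x)}{(1+x)\Phi(x)}\right)^q,$$ and $\xi_{\phi,q}(d)=\sup_{x\ge0}\Xi_{\phi,q}(d,x)$. If $S_{\phi,p}$ is concave on the non-negative reals, then for any two vectors $\vec x,\vec y\in\phi(\mathbb R^+)^d$, $$\left|f^\phi_d(\vec x)-f^\phi_d(\vec y)\right|^q\le\xi_{\phi,q}(d)\,\|\vec x-\vec y\|_q^q.$$
   Context: $f_d(R_1,\dots,R_d)=\lambda\prod_{i=1}^d\frac{1}{1+R_i}$, and the one-argument version is $f_d(x)=f_d(x,\dots,x)=\lambda/(1+x)^d$. A message is a strictly increasing, continuously differentiable function $\phi:(0,\infty)\to\mathbb R$ whose derivative is bounded away from $0$ on every interval $(0,M]$. With $\psi=\phi^{-1}$, $f^\phi_d(x_1,\dots,x_d)=\phi\big(f_d(\psi(x_1),\dots,\psi(x_d))\big)$. *)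

From Stdlib Require Import Reals Lra ClassicalEpsilon.
From Coquelicot Require Import Coquelicot.
Open Scope R_scope.

(* Real power for nonnegative bases: 0^a = 0, x^a = exp(a ln x) for x > 0. *)
Definition rpow (x a : R) : R := if Rle_dec x 0 then 0 else Rpower x a.

Fixpoint sumR (n : nat) (f : nat -> R) : R :=
  match n with O => 0 | S m => sumR m f + f m end.
Fixpoint prodR (n : nat) (f : nat -> R) : R :=
  match n with O => 1 | S m => prodR m f * f m end.

(* f_d(R_1,...,R_d) = lambda * prod_i 1/(1+R_i) ; vectors are nat -> R, indices < d *)
Definition fd (d : nat) (lambda : R) (Rv : nat -> R) : R :=
  lambda * prodR d (fun i => / (1 + Rv i)).

Definition fd1 (d : nat) (lambda x : R) : R := lambda / (1 + x) ^ d.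

(* A message: phi on (0,oo), strictly increasing, C^1, derivative bounded away
   from 0 on every (0,M]. Values of phi outside (0,oo) are irrelevant. *)
Definition message (phi : R -> R) : Prop :=
  (forall x y, 0 < x -> x < y -> phi x < phi y) /\
  (forall x, 0 < x -> ex_derive phi x) /\
  (forall x, 0 < x -> continuous (Derive phi) x) /\
  (forall M, 0 < M -> exists c, 0 < c /\ forall x, 0 < x -> x <= M -> c <= Rabs (Derive phi x)).

(* psi = phi^{-1} : the (unique, since phi is injective on (0,oo)) r > 0 with phi r = y *)
Definition psi (phi : R -> R) (y : R) : R :=
  epsilon (inhabits 0) (fun r => 0 < r /\ phi r = y).

Definition fphi (d : nat) (lambda : R) (phi : R -> R) (xv : nat -> R) : R :=
  phi (fd d lambda (fun i => psi phi (xv i))).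

Definition S_phi (phi : R -> R) (p x : R) : R :=
  rpow (exp (- x) / Derive phi (exp x - 1)) p.

Definition Xi_phi (phi : R -> R) (lambda q : R) (d : nat) (x : R) : R :=
  rpow (INR d) (q - 1) *
  rpow (Derive phi (fd1 d lambda x) * fd1 d lambda x / ((1 + x) * Derive phi x)) q.

Definition xi_phi (phi : R -> R) (lambda q : R) (d : nat) : Rbar :=
  Lub_Rbar (fun r => exists x, 0 < x /\ r = Xi_phi phi lambda q d x).

Definition concave_pos (f : R -> R) : Prop :=
  forall a b t, 0 < a -> 0 < b -> 0 <= t <= 1 ->
    t * f a + (1 - t) * f b <= f (t * a + (1 - t) * b).

Definition qnorm_pow (d : nat) (q : R) (xv yv : nat -> R) : R :=
  sumR d (fun i => rpow (Rabs (xv i - yv i)) q).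

(* Put w(R) = 1 / ((1 + R) Phi(R)). By the mean value theorem along the segment from x to y
   (which stays in phi((0,oo))^d, an interval), |f^phi(x) - f^phi(y)| is at most
   Phi(f_d(R)) f_d(R) sum_i w(R_i) |x_i - y_i| for some positive R. Hoelder bounds the sum by
   (sum_i w(R_i)^p)^(1/p) ||x - y||_q, and since w(R)^p = S_{phi,p}(ln (1 + R)), Jensen's
   inequality for the concave S_{phi,p} gives sum_i w(R_i)^p <= d w(x)^p, where 1 + x is the
   geometric mean of the 1 + R_i. As f_d(R) = f_d(x), raising to the power q = p (q - 1)
   yields exactly Xi_{phi,q}(d, x) ||x - y||_q^q <= xi_{phi,q}(d) ||x - y||_q^q. *)

From Stdlib Require Import Reals Lra Lia ClassicalEpsilon Ranalysis5.
From Coquelicot Require Import Coquelicot.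
Open Scope R_scope.

Lemma sumR_ext n f g : (forall i, (i < n)%nat -> f i = g i) -> sumR n f = sumR n g.
Proof.
  induction n as [|n IH]; intros Hfg; simpl; [reflexivity|].
  rewrite IH by (intros; apply Hfg; lia). now rewrite Hfg by lia.
Qed.

Lemma prodR_ext n f g : (forall i, (i < n)%nat -> f i = g i) -> prodR n f = prodR n g.
Proof.
  induction n as [|n IH]; intros Hfg; simpl; [reflexivity|].
  rewrite IH by (intros; apply Hfg; lia). now rewrite Hfg by lia.
Qed.

Lemma sumR_le n f g : (forall i, (i < n)%nat -> f i <= g i) -> sumR n f <= sumR n g.
Proof.
  induction n as [|n IH]; intros Hfg; simpl; [lra|].
  apply Rplus_le_compat; [apply IH; intros; apply Hfg|apply Hfg]; lia.
Qed.

Lemma sumR_ge0 n f : (forall i, (i < n)%nat -> 0 <= f i) -> 0 <= sumR n f.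
Proof.
  induction n as [|n IH]; intros Hf; simpl; [lra|].
  apply Rplus_le_le_0_compat; [apply IH; intros; apply Hf|apply Hf]; lia.
Qed.

Lemma sumR_gt0 n f : (0 < n)%nat -> (forall i, (i < n)%nat -> 0 < f i) -> 0 < sumR n f.
Proof.
  destruct n as [|n]; [lia|]; intros _ Hf; simpl.
  apply Rplus_le_lt_0_compat; [apply sumR_ge0; intros; left; apply Hf|apply Hf]; lia.
Qed.

Lemma sumR_eq0 n f : (forall i, (i < n)%nat -> 0 <= f i) -> sumR n f = 0 ->
  forall i, (i < n)%nat -> f i = 0.
Proof.
  induction n as [|n IH]; intros Hf Hsum i Hi; simpl in Hsum; [lia|].
  assert (0 <= sumR n f) by (apply sumR_ge0; intros; apply Hf; lia).
  assert (0 <= f n) by (apply Hf; lia).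
  destruct (Nat.eq_dec i n) as [->|Hin]; [lra|].
  apply IH; [intros; apply Hf; lia|lra|lia].
Qed.

Lemma sumR_scal_l n c f : sumR n (fun i => c * f i) = c * sumR n f.
Proof. induction n as [|n IH]; simpl; [ring|]. rewrite IH; ring. Qed.

Lemma sumR_plus n f g : sumR n (fun i => f i + g i) = sumR n f + sumR n g.
Proof. induction n as [|n IH]; simpl; [ring|]. rewrite IH; ring. Qed.

Lemma sumR_opp n f : sumR n (fun i => - f i) = - sumR n f.
Proof. induction n as [|n IH]; simpl; [ring|]. rewrite IH; ring. Qed.

Lemma Rabs_sumR n f : Rabs (sumR n f) <= sumR n (fun i => Rabs (f i)).
Proof.
  induction n as [|n IH]; simpl; [rewrite Rabs_R0; lra|].
  eapply Rle_trans; [apply Rabs_triang|lra].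
Qed.

Lemma prodR_gt0 n f : (forall i, (i < n)%nat -> 0 < f i) -> 0 < prodR n f.
Proof.
  induction n as [|n IH]; intros Hf; simpl; [lra|].
  apply Rmult_lt_0_compat; [apply IH; intros; apply Hf|apply Hf]; lia.
Qed.

Lemma prodR_inv n f : (forall i, (i < n)%nat -> f i <> 0) ->
  prodR n (fun i => / f i) = / prodR n f.
Proof.
  induction n as [|n IH]; intros Hf; simpl; [now rewrite Rinv_1|].
  rewrite IH, Rinv_mult by (intros; apply Hf; lia). reflexivity.
Qed.

Lemma exp_sumR n f : exp (sumR n f) = prodR n (fun i => exp (f i)).
Proof. induction n as [|n IH]; simpl; [apply exp_0|]. now rewrite exp_plus, IH. Qed.

Lemma rpow_Rpower x a : 0 < x -> rpow x a = Rpower x a.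
Proof. intros Hx. unfold rpow. destruct (Rle_dec x 0); [lra|reflexivity]. Qed.

Lemma rpow0_l a : rpow 0 a = 0.
Proof. unfold rpow. destruct (Rle_dec 0 0); [reflexivity|lra]. Qed.

Lemma rpow_gt0 x a : 0 < x -> 0 < rpow x a.
Proof. intros Hx. rewrite rpow_Rpower by exact Hx. apply exp_pos. Qed.

Lemma rpow_ge0 x a : 0 <= rpow x a.
Proof.
  destruct (Rle_lt_dec x 0) as [Hx|Hx]; [unfold rpow; destruct (Rle_dec x 0); lra|].
  left; apply rpow_gt0, Hx.
Qed.

Lemma rpow_le_base u v a : 0 <= a -> 0 <= u <= v -> rpow u a <= rpow v a.
Proof.
  intros Ha [[Hu|<-] Huv]; [|rewrite rpow0_l; apply rpow_ge0].
  rewrite !rpow_Rpower by lra. apply Rle_Rpower_l; lra.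
Qed.

Lemma rpow_mult_distr x y a : 0 <= x -> 0 <= y -> rpow (x * y) a = rpow x a * rpow y a.
Proof.
  intros [Hx|<-] [Hy|<-]; rewrite ?Rmult_0_l, ?Rmult_0_r, ?rpow0_l; try ring.
  rewrite !rpow_Rpower by (try apply Rmult_lt_0_compat; assumption).
  symmetry; apply Rpower_mult_distr; assumption.
Qed.

Lemma rpow_Rinv x a : 0 < x -> rpow (/ x) a = / rpow x a.
Proof.
  intros Hx. rewrite !rpow_Rpower by (try apply Rinv_0_lt_compat; exact Hx).
  unfold Rpower. rewrite ln_Rinv, <- exp_Ropp by exact Hx. f_equal; ring.
Qed.

Lemma rpow_div_distr x y a : 0 <= x -> 0 < y -> rpow (x / y) a = rpow x a / rpow y a.
Proof.
  intros Hx Hy. unfold Rdiv.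
  assert (0 < / y) by (apply Rinv_0_lt_compat; exact Hy).
  rewrite rpow_mult_distr, rpow_Rinv by lra. reflexivity.
Qed.

Lemma rpow_rpow x a b : 0 <= x -> rpow (rpow x a) b = rpow x (a * b).
Proof.
  intros [Hx|<-]; [|now rewrite !rpow0_l].
  rewrite (rpow_Rpower x), rpow_Rpower, rpow_Rpower by (try apply exp_pos; exact Hx).
  apply Rpower_mult.
Qed.

Lemma rpow_1 x : 0 <= x -> rpow x 1 = x.
Proof. intros [Hx|<-]; [rewrite rpow_Rpower; [apply Rpower_1|]|apply rpow0_l]; exact Hx. Qed.

Lemma rpow_eq0 x a : 0 <= x -> rpow x a = 0 -> x = 0.
Proof. intros [Hx|Hx] H; [pose proof (rpow_gt0 x a Hx); lra|auto]. Qed.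

Lemma ln_le_sub1 y : 0 < y -> ln y <= y - 1.
Proof. intros Hy. pose proof (exp_ineq1_le (ln y)) as H. rewrite exp_ln in H; lra. Qed.

Lemma weighted_AM_GM t u v : 0 <= t <= 1 -> 0 < u -> 0 < v ->
  exp (t * ln u + (1 - t) * ln v) <= t * u + (1 - t) * v.
Proof.
  intros Ht Hu Hv. set (m := t * u + (1 - t) * v).
  assert (Hm : 0 < m) by (unfold m; destruct (Req_dec t 0); [subst|]; nra).
  (* tangent line of ln at m, averaged over u and v *)
  pose proof (ln_le_sub1 (u / m) ltac:(apply Rdiv_lt_0_compat; lra)) as Lu.
  pose proof (ln_le_sub1 (v / m) ltac:(apply Rdiv_lt_0_compat; lra)) as Lv.
  rewrite ln_div in Lu, Lv by lra.
  assert (Havg : t * (u / m - 1) + (1 - t) * (v / m - 1) = 0) by (unfold m in *; field; lra).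
  assert (Hle : t * ln u + (1 - t) * ln v <= ln m) by nra.
  rewrite <- (exp_ln m) by exact Hm.
  destruct Hle as [Hlt|Heq]; [left; apply exp_increasing, Hlt|right; rewrite Heq; reflexivity].
Qed.

Lemma Young a b p q : 0 <= a -> 0 <= b -> 0 < p -> 0 < q -> / p + / q = 1 ->
  a * b <= rpow a p / p + rpow b q / q.
Proof.
  intros Ha Hb Hp Hq Hpq.
  assert (0 <= rpow a p / p) by (apply Rdiv_le_0_compat; [apply rpow_ge0|lra]).
  assert (0 <= rpow b q / q) by (apply Rdiv_le_0_compat; [apply rpow_ge0|lra]).
  destruct Ha as [Ha|<-]; [|lra]. destruct Hb as [Hb|<-]; [|lra].
  rewrite !rpow_Rpower by assumption.
  assert (Ht : 0 <= / p <= 1) by (pose proof (Rinv_0_lt_compat p Hp);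
                                  pose proof (Rinv_0_lt_compat q Hq); lra).
  pose proof (weighted_AM_GM (/ p) (Rpower a p) (Rpower b q) Ht (exp_pos _) (exp_pos _)) as AMGM.
  replace (1 - / p) with (/ q) in AMGM by lra.
  unfold Rpower in AMGM at 1 2. rewrite !ln_exp in AMGM.
  replace (/ p * (p * ln a) + / q * (q * ln b)) with (ln a + ln b) in AMGM by (field; lra).
  rewrite exp_plus, !exp_ln in AMGM by assumption. unfold Rdiv. lra.
Qed.

Lemma Holder n (a b : nat -> R) p q : 0 < p -> 0 < q -> / p + / q = 1 ->
  (forall i, (i < n)%nat -> 0 <= a i) -> (forall i, (i < n)%nat -> 0 <= b i) ->
  0 < sumR n (fun i => rpow (a i) p) -> 0 < sumR n (fun i => rpow (b i) q) ->
  sumR n (fun i => a i * b i) <=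
  rpow (sumR n (fun i => rpow (a i) p)) (/ p) * rpow (sumR n (fun i => rpow (b i) q)) (/ q).
Proof.
  intros Hp Hq Hpq Ha Hb HA HB.
  set (A := sumR n (fun i => rpow (a i) p)) in *.
  set (B := sumR n (fun i => rpow (b i) q)) in *.
  set (nA := rpow A (/ p)). set (nB := rpow B (/ q)).
  assert (HnA : 0 < nA) by apply rpow_gt0, HA.
  assert (HnB : 0 < nB) by apply rpow_gt0, HB.
  assert (HnAp : rpow nA p = A).
  { unfold nA. rewrite rpow_rpow, Rinv_l, rpow_1; lra. }
  assert (HnBq : rpow nB q = B).
  { unfold nB. rewrite rpow_rpow, Rinv_l, rpow_1; lra. }
  (* Young's inequality for the normalised vectors a / nA, b / nB, summed *)
  assert (Hnorm : sumR n (fun i => a i / nA * (b i / nB)) <= 1).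
  { eapply Rle_trans.
    - apply sumR_le with (g := fun i => / (A * p) * rpow (a i) p + / (B * q) * rpow (b i) q).
      intros i Hi. eapply Rle_trans.
      + apply (Young _ _ p q); try assumption; apply Rdiv_le_0_compat;
          [apply Ha, Hi|exact HnA|apply Hb, Hi|exact HnB].
      + rewrite !rpow_div_distr, HnAp, HnBq by (try apply Ha; try apply Hb; assumption).
        right; field; lra.
    - rewrite sumR_plus, !sumR_scal_l. fold A B. right. rewrite <- Hpq. field. lra. }
  rewrite (sumR_ext n _ (fun i => nA * nB * (a i / nA * (b i / nB)))) by (intros; field; lra).
  rewrite sumR_scal_l. pose proof (Rmult_lt_0_compat _ _ HnA HnB). nra.
Qed.

Lemma Jensen_concave (f : R -> R) : concave_pos f -> forall n (u : nat -> R),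
  (forall i, (i < S n)%nat -> 0 < u i) ->
  sumR (S n) (fun i => f (u i)) <= INR (S n) * f (sumR (S n) u / INR (S n)).
Proof.
  intros Hc. induction n as [|n IH]; intros u Hu.
  { simpl. replace ((0 + u 0%nat) / 1) with (u 0%nat) by field. lra. }
  change (sumR (S n) (fun i => f (u i)) + f (u (S n)) <=
          INR (S (S n)) * f ((sumR (S n) u + u (S n)) / INR (S (S n)))).
  set (m := INR (S n)). assert (Hm : 0 < m) by (apply lt_0_INR; lia).
  replace (INR (S (S n))) with (m + 1) by (unfold m; rewrite (S_INR (S n)); reflexivity).
  pose proof (IH u ltac:(intros; apply Hu; lia)) as IHu. fold m in IHu.
  set (M := sumR (S n) u / m) in *.
  assert (HM : 0 < M) by (apply Rdiv_lt_0_compat; [apply sumR_gt0; [lia|intros; apply Hu; lia]|lra]).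
  assert (Hun : 0 < u (S n)) by (apply Hu; lia).
  assert (Ht : 0 <= m / (m + 1) <= 1).
  { split; [apply Rdiv_le_0_compat; lra|]. apply Rmult_le_reg_r with (m + 1); [lra|].
    field_simplify; lra. }
  (* the new mean is the convex combination m/(m+1) of the old mean and 1/(m+1) of u (S n) *)
  pose proof (Hc M (u (S n)) (m / (m + 1)) HM Hun Ht) as C.
  replace (m / (m + 1) * M + (1 - m / (m + 1)) * u (S n))
    with ((sumR (S n) u + u (S n)) / (m + 1)) in C by (unfold M; field; lra).
  apply Rmult_le_compat_l with (r := m + 1) in C; [|lra].
  replace ((m + 1) * (m / (m + 1) * f M + (1 - m / (m + 1)) * f (u (S n))))
    with (m * f M + f (u (S n))) in C by (field; lra).
  lra.
Qed.

Lemma Derive_ge0_increasing (f : R -> R) x : ex_derive f x ->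
  (forall h, 0 < h -> f x < f (x + h)) -> 0 <= Derive f x.
Proof.
  intros Hex Hinc. apply Rnot_lt_le. intros Hneg.
  pose proof (proj1 (is_derive_Reals _ _ _) (Derive_correct f x Hex)) as Hlim.
  destruct (Hlim (- Derive f x / 2) ltac:(lra)) as [[delta Hdelta] Hclose].
  assert (Hh : 0 < delta / 2) by lra.
  specialize (Hclose (delta / 2) ltac:(lra) ltac:(simpl; rewrite Rabs_right; lra)).
  assert (0 < (f (x + delta / 2) - f x) / (delta / 2))
    by (apply Rdiv_lt_0_compat; [pose proof (Hinc _ Hh)|]; lra).
  apply Rabs_def2 in Hclose. lra.
Qed.

Section Message.

Variable phi : R -> R.
Hypothesis Hphi : message phi.

Lemma message_lt x y : 0 < x -> x < y -> phi x < phi y.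
Proof. apply Hphi. Qed.

Lemma message_inj a b : 0 < a -> 0 < b -> phi a = phi b -> a = b.
Proof.
  intros Ha Hb E. destruct (Rtotal_order a b) as [H|[H|H]]; [|exact H|].
  - pose proof (message_lt a b Ha H); lra.
  - pose proof (message_lt b a Hb H); lra.
Qed.

Lemma psi_phi r : 0 < r -> psi phi (phi r) = r.
Proof.
  intros Hr. unfold psi.
  destruct (epsilon_spec (inhabits 0) (fun s => 0 < s /\ phi s = phi r)) as [Hs Es];
    [exists r; auto|].
  apply message_inj; assumption.
Qed.

Lemma message_ex_derive x : 0 < x -> ex_derive phi x.
Proof. apply Hphi. Qed.

Lemma message_continuity_pt x : 0 < x -> continuity_pt phi x.
Proof.
  intros Hx. apply derivable_continuous_pt, ex_derive_Reals_0, message_ex_derive, Hx.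
Qed.

Lemma Derive_message_gt0 x : 0 < x -> 0 < Derive phi x.
Proof.
  intros Hx. destruct Hphi as [_ [_ [_ Hbound]]].
  destruct (Hbound x Hx) as [c [Hc Hcx]]. specialize (Hcx x Hx (Rle_refl x)).
  assert (Hge : 0 <= Derive phi x).
  { apply Derive_ge0_increasing; [apply message_ex_derive, Hx|].
    intros h Hh. apply message_lt; lra. }
  destruct Hge as [Hgt|Heq]; [exact Hgt|].
  rewrite <- Heq, Rabs_R0 in Hcx. lra.
Qed.

Lemma message_image_convex a b t : 0 < a -> 0 < b -> 0 <= t <= 1 ->
  exists r, 0 < r /\ phi r = phi a + t * (phi b - phi a).
Proof.
  intros Ha Hb Ht. destruct (Rtotal_order a b) as [Hab|[<-|Hab]].
  - pose proof (message_lt a b Ha Hab).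
    destruct (f_interv_is_interv phi a b (phi a + t * (phi b - phi a)) Hab) as [r [Hr Er]];
      [nra|intros; apply message_continuity_pt; lra|].
    exists r; split; [lra|exact Er].
  - exists a; split; [exact Ha|ring].
  - pose proof (message_lt b a Hb Hab).
    destruct (f_interv_is_interv phi b a (phi a + t * (phi b - phi a)) Hab) as [r [Hr Er]];
      [nra|intros; apply message_continuity_pt; lra|].
    exists r; split; [lra|exact Er].
Qed.

Lemma psi_phi_interval r lb ub : 0 < lb -> lb < ub -> phi lb <= r <= phi ub ->
  lb <= psi phi r <= ub /\ phi (psi phi r) = r.
Proof.
  intros Hlb Hlu Hr.
  destruct (f_interv_is_interv phi lb ub r Hlu Hr) as [s [Hs <-]];
    [intros; apply message_continuity_pt; lra|].
  rewrite psi_phi by lra. auto.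
Qed.

Lemma is_derive_psi r : 0 < r -> is_derive (psi phi) (phi r) (/ Derive phi r).
Proof.
  intros Hr.
  assert (Hlu : r / 2 < 2 * r) by lra.
  assert (Hinv : forall y, phi (r / 2) <= y <= phi (2 * r) ->
                 r / 2 <= psi phi y <= 2 * r /\ phi (psi phi y) = y)
    by (intros; apply psi_phi_interval; lra).
  assert (Hcont : continuity_pt (psi phi) (phi r)).
  { apply (continuity_pt_recip_interv phi (psi phi) (r / 2) (2 * r) Hlu).
    - intros; apply message_lt; lra.
    - intros y H1 H2. apply (Hinv y); lra.
    - intros y H1 H2. apply (Hinv y); lra.
    - intros; apply message_continuity_pt; lra.
    - split; apply message_lt; lra. }
  assert (Hder : forall a, psi phi (phi (r / 2)) <= a <= psi phi (phi (2 * r)) ->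
                 derivable_pt phi a).
  { intros a Ha. rewrite !psi_phi in Ha by lra.
    apply ex_derive_Reals_0, message_ex_derive; lra. }
  assert (Hin : psi phi (phi (r / 2)) <= psi phi (phi r) <= psi phi (phi (2 * r)))
    by (rewrite !psi_phi by lra; lra).
  pose proof (derivable_pt_lim_recip_interv phi (psi phi) (phi (r / 2)) (phi (2 * r)) (phi r)
    Hder Hcont ltac:(apply message_lt; lra) ltac:(split; apply message_lt; lra) Hin
    ltac:(intros y Hy; apply (Hinv y); lra)) as D.
  rewrite Derive_Reals, psi_phi in D by lra.
  apply is_derive_Reals. rewrite <- (Rmult_1_l (/ _)). apply D.
  pose proof (Derive_message_gt0 r Hr). lra.
Qed.

End Message.

Lemma is_derive_prodR n (u : nat -> R -> R) (du : nat -> R) t :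
  (forall i, (i < n)%nat -> is_derive (u i) t (du i)) -> (forall i, (i < n)%nat -> u i t <> 0) ->
  is_derive (fun s => prodR n (fun i => u i s)) t
            (prodR n (fun i => u i t) * sumR n (fun i => du i / u i t)).
Proof.
  induction n as [|n IH]; intros Hu Hnz; simpl.
  - replace (1 * 0) with 0 by ring. apply (@is_derive_const R_AbsRing R_NormedModule).
  - assert (u n t <> 0) by (apply Hnz; lia).
    replace (prodR n (fun i => u i t) * u n t * (sumR n (fun i => du i / u i t) + du n / u n t))
      with (prodR n (fun i => u i t) * sumR n (fun i => du i / u i t) * u n t
            + prodR n (fun i => u i t) * du n) by (field; assumption).
    apply (is_derive_mult (fun s => prodR n (fun i => u i s)) (u n));
      [apply IH; intros; [apply Hu|apply Hnz]; lia|apply Hu; lia|intros; apply Rmult_comm].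
Qed.

Lemma is_derive_fd d lambda (r : nat -> R -> R) (dr : nat -> R) t :
  (forall i, (i < d)%nat -> is_derive (r i) t (dr i)) -> (forall i, (i < d)%nat -> 0 < r i t) ->
  is_derive (fun s => fd d lambda (fun i => r i s)) t
            (- fd d lambda (fun i => r i t) * sumR d (fun i => dr i / (1 + r i t))).
Proof.
  intros Hr Hpos. unfold fd.
  assert (Hlog : sumR d (fun i => - dr i / (1 + r i t) ^ 2 / / (1 + r i t))
                 = - sumR d (fun i => dr i / (1 + r i t))).
  { rewrite <- sumR_opp. apply sumR_ext. intros i Hi. pose proof (Hpos i Hi). field. lra. }
  replace (- (lambda * prodR d (fun i => / (1 + r i t))) * sumR d (fun i => dr i / (1 + r i t)))
    with (lambda * (prodR d (fun i => / (1 + r i t))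
                    * sumR d (fun i => - dr i / (1 + r i t) ^ 2 / / (1 + r i t))))
    by (rewrite Hlog; ring).
  apply is_derive_scal, (is_derive_prodR d (fun i s => / (1 + r i s))).
  - intros i Hi. pose proof (Hpos i Hi).
    apply (is_derive_inv (fun s => 1 + r i s)); [|lra].
    replace (dr i) with (0 + dr i) by ring.
    apply (is_derive_plus (fun _ => 1) (r i)); [apply (@is_derive_const R_AbsRing R_NormedModule)|apply Hr, Hi].
  - intros i Hi. pose proof (Hpos i Hi). apply Rinv_neq_0_compat. lra.
Qed.

Lemma fd_gt0 d lambda r : 0 < lambda -> (forall i, (i < d)%nat -> 0 < r i) -> 0 < fd d lambda r.
Proof.
  intros Hlam Hr. apply Rmult_lt_0_compat; [exact Hlam|]. apply prodR_gt0.
  intros i Hi. pose proof (Hr i Hi). apply Rinv_0_lt_compat. lra.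
Qed.

(* [- Derive phi (f_d R) * f_d R * weight phi (R i)] is the partial derivative of [f^phi_d]
   in its i-th argument, at the point [phi R]. *)
Definition weight (phi : R -> R) (x : R) : R := / ((1 + x) * Derive phi x).

Lemma weight_gt0 phi x : message phi -> 0 < x -> 0 < weight phi x.
Proof.
  intros Hphi Hx. apply Rinv_0_lt_compat, Rmult_lt_0_compat; [lra|].
  apply Derive_message_gt0; assumption.
Qed.

Section Segment.

Variables (phi : R -> R) (d : nat) (xv yv : nat -> R).
Hypothesis Hphi : message phi.
Hypothesis Hx : forall i, (i < d)%nat -> exists r, 0 < r /\ xv i = phi r.
Hypothesis Hy : forall i, (i < d)%nat -> exists r, 0 < r /\ yv i = phi r.

Definition segment_psi (i : nat) (t : R) : R := psi phi (xv i + t * (yv i - xv i)).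

Lemma segment_psi_spec i t : (i < d)%nat -> 0 <= t <= 1 ->
  0 < segment_psi i t /\ phi (segment_psi i t) = xv i + t * (yv i - xv i).
Proof.
  intros Hi Ht. unfold segment_psi.
  destruct (Hx i Hi) as [a [Ha ->]]. destruct (Hy i Hi) as [b [Hb ->]].
  destruct (message_image_convex phi Hphi a b t Ha Hb Ht) as [r [Hr <-]].
  rewrite psi_phi; auto.
Qed.

Lemma is_derive_segment_psi i t : (i < d)%nat -> 0 <= t <= 1 ->
  is_derive (segment_psi i) t ((yv i - xv i) / Derive phi (segment_psi i t)).
Proof.
  intros Hi Ht. destruct (segment_psi_spec i t Hi Ht) as [Hr Er].
  unfold Rdiv. apply (is_derive_comp (psi phi) (fun s => xv i + s * (yv i - xv i))).
  - rewrite <- Er. apply is_derive_psi; assumption.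
  - auto_derive; [exact I|ring].
Qed.

Lemma fphi_mean_value lambda : 0 < lambda ->
  exists r : nat -> R, (forall i, (i < d)%nat -> 0 < r i) /\
    Rabs (fphi d lambda phi xv - fphi d lambda phi yv) <=
    Derive phi (fd d lambda r) * fd d lambda r *
    sumR d (fun i => weight phi (r i) * Rabs (xv i - yv i)).
Proof.
  intros Hlam.
  set (F := fun t => fd d lambda (fun i => segment_psi i t)).
  set (dF := fun t => - F t * sumR d (fun i =>
               (yv i - xv i) / Derive phi (segment_psi i t) / (1 + segment_psi i t))).
  assert (HF : forall t, 0 <= t <= 1 -> 0 < F t)
    by (intros t Ht; apply fd_gt0; [exact Hlam|intros i Hi; apply segment_psi_spec; assumption]).
  assert (HphiF_der : forall t, 0 <= t <= 1 ->
                      derivable_pt_lim (fun s => phi (F s)) t (dF t * Derive phi (F t))).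
  { intros t Ht. apply is_derive_Reals, (is_derive_comp phi F).
    - apply Derive_correct, message_ex_derive, HF; assumption.
    - apply is_derive_fd; intros i Hi;
        [apply is_derive_segment_psi|apply segment_psi_spec]; assumption. }
  destruct (MVT_cor3 (fun s => phi (F s)) _ 0 1 Rlt_0_1 (fun t H0 H1 => HphiF_der t (conj H0 H1)))
    as [c [Hc0 [Hc1 Hmvt]]].
  assert (Hc : 0 <= c <= 1) by lra.
  exists (fun i => segment_psi i c). split; [intros i Hi; apply segment_psi_spec; assumption|].
  assert (Hends : fphi d lambda phi xv = phi (F 0) /\ fphi d lambda phi yv = phi (F 1)).
  { split; unfold fphi, F, fd, segment_psi; do 2 f_equal; apply prodR_ext; intros i _;
      do 3 f_equal; ring. }
  change (fd d lambda (fun i => segment_psi i c)) with (F c).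
  destruct Hends as [-> ->]. rewrite Rabs_minus_sym, Hmvt.
  replace (phi (F 0) + dF c * Derive phi (F c) * (1 - 0) - phi (F 0))
    with (- (Derive phi (F c) * F c) * sumR d (fun i =>
            (yv i - xv i) / Derive phi (segment_psi i c) / (1 + segment_psi i c)))
    by (unfold dF; ring).
  pose proof (HF c Hc). pose proof (Derive_message_gt0 phi Hphi (F c) (HF c Hc)).
  rewrite Rabs_mult, Rabs_Ropp, Rabs_right by (apply Rle_ge; left; apply Rmult_lt_0_compat; lra).
  apply Rmult_le_compat_l; [left; apply Rmult_lt_0_compat; lra|].
  eapply Rle_trans; [apply Rabs_sumR|]. right. apply sumR_ext. intros i Hi.
  destruct (segment_psi_spec i c Hi Hc) as [Hr _]. pose proof (Derive_message_gt0 phi Hphi _ Hr).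
  rewrite !Rabs_div, Rabs_minus_sym, (Rabs_right (Derive _ _)), (Rabs_right (1 + _)) by lra.
  unfold weight. field. lra.
Qed.

End Segment.

Definition geo_mean1p (d : nat) (r : nat -> R) : R :=
  exp (sumR d (fun i => ln (1 + r i)) / INR d) - 1.

Lemma geo_mean1p_gt0 d r : (0 < d)%nat -> (forall i, (i < d)%nat -> 0 < r i) ->
  0 < geo_mean1p d r.
Proof.
  intros Hd Hr. unfold geo_mean1p.
  assert (Hmean : 0 < sumR d (fun i => ln (1 + r i)) / INR d).
  { apply Rdiv_lt_0_compat; [|apply lt_0_INR, Hd].
    apply sumR_gt0; [exact Hd|]. intros i Hi. pose proof (Hr i Hi).
    rewrite <- ln_1. apply ln_increasing; lra. }
  pose proof (exp_ineq1_le (sumR d (fun i => ln (1 + r i)) / INR d)). lra.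
Qed.

Lemma fd_geo_mean1p d lambda r : (0 < d)%nat -> (forall i, (i < d)%nat -> 0 < r i) ->
  fd d lambda r = fd1 d lambda (geo_mean1p d r).
Proof.
  intros Hd Hr. unfold fd, fd1, geo_mean1p.
  rewrite prodR_inv by (intros i Hi; pose proof (Hr i Hi); lra).
  replace (1 + (exp (sumR d (fun i => ln (1 + r i)) / INR d) - 1))
    with (exp (sumR d (fun i => ln (1 + r i)) / INR d)) by ring.
  rewrite <- Rpower_pow by apply exp_pos. unfold Rpower. rewrite ln_exp.
  replace (INR d * (sumR d (fun i => ln (1 + r i)) / INR d))
    with (sumR d (fun i => ln (1 + r i))) by (field; apply not_0_INR; lia).
  rewrite exp_sumR. unfold Rdiv. do 2 f_equal.
  apply prodR_ext. intros i Hi. pose proof (Hr i Hi). symmetry. apply exp_ln. lra.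
Qed.

Lemma S_phi_weight phi p u : S_phi phi p u = rpow (weight phi (exp u - 1)) p.
Proof.
  unfold S_phi, weight. rewrite exp_Ropp. f_equal.
  replace (1 + (exp u - 1)) with (exp u) by ring. unfold Rdiv. now rewrite Rinv_mult.
Qed.

Lemma sumR_weight_pow_le phi p d r : concave_pos (S_phi phi p) ->
  (0 < d)%nat -> (forall i, (i < d)%nat -> 0 < r i) ->
  sumR d (fun i => rpow (weight phi (r i)) p) <= INR d * rpow (weight phi (geo_mean1p d r)) p.
Proof.
  intros Hconc Hd Hr.
  (* Jensen for S_phi at the points ln (1 + r i), whose mean is ln (1 + geo_mean1p d r) *)
  rewrite (sumR_ext d _ (fun i => S_phi phi p (ln (1 + r i)))).
  - destruct d as [|n]; [lia|].
    unfold geo_mean1p. rewrite <- S_phi_weight.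
    apply Jensen_concave; [exact Hconc|].
    intros i Hi. pose proof (Hr i Hi). rewrite <- ln_1. apply ln_increasing; lra.
  - intros i Hi. pose proof (Hr i Hi). rewrite S_phi_weight, exp_ln by lra.
    do 2 f_equal. ring.
Qed.

Lemma conjugate_exponent_pred p q : 0 < p -> 0 < q -> / p + / q = 1 ->
  0 < q - 1 /\ / p * q = q - 1.
Proof.
  intros Hp Hq Hpq.
  assert (Hqp : / p * q = q - 1) by (replace (/ p) with (1 - / q) by lra; field; lra).
  split; [|exact Hqp]. rewrite <- Hqp. apply Rmult_lt_0_compat; [apply Rinv_0_lt_compat|]; lra.
Qed.

Lemma Xi_phi_geo_mean1p lambda d phi q r :
  0 < lambda -> (0 < d)%nat -> message phi -> (forall i, (i < d)%nat -> 0 < r i) ->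
  Xi_phi phi lambda q d (geo_mean1p d r) = rpow (INR d) (q - 1) *
    (rpow (Derive phi (fd d lambda r) * fd d lambda r) q * rpow (weight phi (geo_mean1p d r)) q).
Proof.
  intros Hlam Hd Hphi Hr.
  pose proof (weight_gt0 phi _ Hphi (geo_mean1p_gt0 d r Hd Hr)).
  pose proof (fd_gt0 d lambda r Hlam Hr) as HF.
  pose proof (Derive_message_gt0 phi Hphi _ HF).
  unfold Xi_phi. rewrite <- rpow_mult_distr by (try apply Rmult_le_pos; lra).
  rewrite fd_geo_mean1p by assumption. reflexivity.
Qed.

Lemma fd_weighted_sum_bound lambda d phi p q (r b : nat -> R) :
  0 < lambda -> (0 < d)%nat -> message phi ->
  0 < p -> 0 < q -> / p + / q = 1 -> concave_pos (S_phi phi p) ->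
  (forall i, (i < d)%nat -> 0 < r i) -> (forall i, (i < d)%nat -> 0 <= b i) ->
  0 < sumR d (fun i => rpow (b i) q) ->
  rpow (Derive phi (fd d lambda r) * fd d lambda r * sumR d (fun i => weight phi (r i) * b i)) q
  <= Xi_phi phi lambda q d (geo_mean1p d r) * sumR d (fun i => rpow (b i) q).
Proof.
  intros Hlam Hd Hphi Hp Hq Hpq Hconc Hr Hb HN.
  destruct (conjugate_exponent_pred p q Hp Hq Hpq) as [Hq1 Hqp].
  rewrite Xi_phi_geo_mean1p by assumption.
  set (N := sumR d (fun i => rpow (b i) q)) in *.
  set (wb := weight phi (geo_mean1p d r)).
  assert (Hwb : 0 < wb) by (apply weight_gt0, geo_mean1p_gt0; assumption).
  assert (Hw : forall i, (i < d)%nat -> 0 < weight phi (r i))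
    by (intros; apply weight_gt0, Hr; assumption).
  set (A := sumR d (fun i => rpow (weight phi (r i)) p)).
  assert (HA : 0 < A) by (apply sumR_gt0; [exact Hd|intros; apply rpow_gt0, Hw; assumption]).
  set (K := Derive phi (fd d lambda r) * fd d lambda r).
  assert (HK : 0 <= K).
  { pose proof (fd_gt0 d lambda r Hlam Hr).
    left; apply Rmult_lt_0_compat; [apply Derive_message_gt0|]; assumption. }
  assert (Hholder : sumR d (fun i => weight phi (r i) * b i) <= rpow A (/ p) * rpow N (/ q)).
  { apply Holder; try assumption. intros i Hi. left; apply Hw, Hi. }
  assert (Hjensen : rpow A (q - 1) <= rpow (INR d) (q - 1) * rpow wb q).
  { eapply Rle_trans.
    - apply rpow_le_base; [lra|]. split; [lra|]. apply sumR_weight_pow_le; assumption.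
    - fold wb. pose proof (pos_INR d).
      rewrite rpow_mult_distr, rpow_rpow by (try apply rpow_ge0; lra).
      replace (p * (q - 1)) with q by (rewrite <- Hqp; field; lra). lra. }
  assert (HS : 0 <= sumR d (fun i => weight phi (r i) * b i)).
  { apply sumR_ge0. intros i Hi. apply Rmult_le_pos; [left; apply Hw|apply Hb]; exact Hi. }
  eapply Rle_trans; [apply rpow_le_base; [lra|split; [apply Rmult_le_pos; assumption|]];
                     apply Rmult_le_compat_l; [exact HK|exact Hholder]|].
  (* (A^(1/p) N^(1/q))^q = A^(q-1) N *)
  rewrite !rpow_mult_distr, !rpow_rpow, Hqp, Rinv_l, rpow_1 by (try apply rpow_ge0; lra).
  pose proof (rpow_ge0 K q).
  apply Rle_trans with (rpow K q * (rpow (INR d) (q - 1) * rpow wb q * N)).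
  - apply Rmult_le_compat_l; [lra|]. apply Rmult_le_compat_r; lra.
  - right; ring.
Qed.

Lemma qnorm_pow_ge0 d q xv yv : 0 <= qnorm_pow d q xv yv.
Proof. apply sumR_ge0. intros; apply rpow_ge0. Qed.

Lemma qnorm_pow_eq0 d q xv yv : qnorm_pow d q xv yv = 0 -> forall i, (i < d)%nat -> xv i = yv i.
Proof.
  intros H0 i Hi.
  pose proof (sumR_eq0 d _ (fun i _ => rpow_ge0 _ _) H0 i Hi) as Hi0.
  apply rpow_eq0 in Hi0; [|apply Rabs_pos].
  destruct (Req_dec (xv i - yv i) 0) as [Hz|Hz]; [lra|].
  now apply Rabs_no_R0 in Hz.
Qed.

Lemma fphi_ext d lambda phi xv yv : (forall i, (i < d)%nat -> xv i = yv i) ->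
  fphi d lambda phi xv = fphi d lambda phi yv.
Proof. intros H. unfold fphi, fd. do 2 f_equal. apply prodR_ext. intros i Hi. now rewrite H. Qed.

Lemma Xi_le_xi phi lambda q d x : 0 < x ->
  Rbar_le (Xi_phi phi lambda q d x) (xi_phi phi lambda q d).
Proof.
  intros Hx. apply (Lub_Rbar_correct (fun r => exists x, 0 < x /\ r = Xi_phi phi lambda q d x)).
  exists x; auto.
Qed.

Lemma Rbar_le_mult_upper (r s N : R) (X : Rbar) : 0 < N -> Rbar_le s X -> r <= s * N ->
  Rbar_le r (Rbar_mult X N).
Proof.
  intros HN HsX Hr. destruct X as [x| |]; simpl in HsX |- *.
  - eapply Rle_trans; [exact Hr|]. apply Rmult_le_compat_r; lra.
  - destruct (Rle_dec 0 N) as [HN0|]; [|lra].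
    destruct (Rle_lt_or_eq_dec 0 N HN0); [exact I|lra].
  - contradiction.
Qed.

Theorem lemma3p2 (lambda : R) (d : nat) (phi : R -> R) (p q : R)
  (Hlam : 0 < lambda) (Hd : (1 <= d)%nat) (Hphi : message phi)
  (Hp : 0 < p) (Hq : 0 < q) (Hpq : / p + / q = 1)
  (Hconc : concave_pos (S_phi phi p))
  (xv yv : nat -> R)
  (Hx : forall i, (i < d)%nat -> exists r, 0 < r /\ xv i = phi r)
  (Hy : forall i, (i < d)%nat -> exists r, 0 < r /\ yv i = phi r) :
  Rbar_le (Finite (rpow (Rabs (fphi d lambda phi xv - fphi d lambda phi yv)) q))
          (Rbar_mult (xi_phi phi lambda q d) (Finite (qnorm_pow d q xv yv))).
Proof.
  destruct (qnorm_pow_ge0 d q xv yv) as [HN|HN].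
  2: { rewrite (fphi_ext d lambda phi xv yv (qnorm_pow_eq0 d q xv yv (eq_sym HN))).
       rewrite Rminus_diag, Rabs_R0, rpow0_l, <- HN, Rbar_mult_0_r. simpl. lra. }
  destruct (fphi_mean_value phi d xv yv Hphi Hx Hy lambda Hlam) as [r [Hr Hmv]].
  apply (Rbar_le_mult_upper _ (Xi_phi phi lambda q d (geo_mean1p d r))); [exact HN| |].
  - apply Xi_le_xi, geo_mean1p_gt0; assumption.
  - eapply Rle_trans; [apply rpow_le_base; [lra|split; [apply Rabs_pos|exact Hmv]]|].
    apply (fd_weighted_sum_bound lambda d phi p q); try assumption; intros; apply Rabs_pos.
Qed.
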